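(* In the setting below, with $\mu=\alpha_1+\alpha_2+2\alpha_3+2\alpha_4+\alpha_5+\alpha_6$ and $\tau\mu=\alpha_1+\alpha_2+\alpha_3+2\alpha_4+2\alpha_5+\alpha_6$, the vector $$P=(-2\alpha_1-\alpha_3+\alpha_5+2\alpha_6)(-1)\otimes e^{\mu}+(2\alpha_1+\alpha_3-\alpha_5-2\alpha_6)(-1)\otimes e^{\tau\mu}+3\otimes e^{\mu+\alpha_1-\alpha_6}+3\otimes e^{\tau\mu-\alpha_1+\alpha_6}\in V^{\Lambda_0}$$ is a highest weight vector of type $Vir(\tfrac45,\tfrac75)\otimes W^{\Omega_4}$, i.e. it satisfies (HW1)–(HW5) with $h=7/5$ and $\omega_j=\omega_4$.
   Context: Setting. $Q$ is the $E_6$ root lattice with simple roots $\alpha_1,\dots,\alpha_6$ (Dynkin chain $\alpha_1-\alpha_3-\alpha_4-\alpha_5-\alpha_6$, $\alpha_2$ attached to $\alpha_4$), form from the Cartan matrix, fundamental weights $\lambda_i$, $P_{\rm wt}=\bigoplus\mathbb Z\lambda_i$, $\mathfrak h=\mathbb C\otimes P_{\rm wt}$. $\varepsilon$ is bimultiplicative on $P_{\rm wt}$ with $[\varepsilon(\lambda_i,\lambda_j)]$ rows $(1,1,1,1,1,1)$, $(-1,1,1,1,1,-1)$, $(-1,1,1,1,1,1)$, $(1,-1,1,1,1,1)$, $(1,1,1,1,1,-1)$, $(1,1,1,1,1,1)$. $V_{P_{\rm wt}}=S(\hat{\mathfrak h}^-)\otimes\mathbb C[P_{\rm wt}]$ with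 Heisenberg operators $h(n)$ ($[h(m),h'(n)]=m\langle h,h'\rangle\delta_{m+n,0}$, $h(n)1=0$ for $n>0$, $h(0)(u\otimes e^\beta)=\langle h,\beta\rangle u\otimes e^\beta$). For $\alpha\in Q$: $Y(1\otimes e^\alpha,z)=\exp(\sum_{k\ge1}\frac{\alpha(-k)}kz^k)\exp(-\sum_{k\ge1}\frac{\alpha(k)}kz^{-k})e_\alpha z^{\alpha(0)}=\sum_n\{1\otimes e^\alpha\}_nz^{-n-1}$, $e_\alpha(u\otimes e^\beta)=\varepsilon(\alpha,\beta)u\otimes e^{\alpha+\beta}$, $z^{\alpha(0)}(u\otimes e^\beta)=z^{\langle\alpha,\beta\rangle}u\otimes e^\beta$; $Y(h_1(-1)\cdots h_k(-1)\otimes e^\alpha,z)=\,:h_1(z)\cdots h_k(z)Y(1\otimes e^\alpha,z):$, $h(z)=\sum_nh(n)z^{-n-1}$. $V^{\Lambda_0}=S(\hat{\mathfrak h}^-)\otimes\mathbb C[Q]$. $\tau$: $\alpha_1\leftrightarrow\alpha_6$, $\alpha_3\leftrightarrow\alpha_5$; $\mathrm{Proj}(\nu)=(\nu+\tau\nu)/2$. $\theta=\alpha_1+2\alpha_2+2\alpha_3+3\alpha_4+2\alpha_5+\alpha_6$. Raising operators of $\tilde{\mathfrak a}$ ($F_4^{(1)}$): $\{\beta_1\}_0=\{1\otimes e^{\alpha_2}\}_0$, $\{\beta_2\}_0=\{1\otimes e^{\alpha_4}\}_0$, $\{\beta_3\}_0=\{1\otimes e^{\alpha_3}\}_0+\{1\otimes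 e^{\alpha_5}\}_0$, $\{\beta_4\}_0=\{1\otimes e^{\alpha_1}\}_0+\{1\otimes e^{\alpha_6}\}_0$, $\{1\otimes e^{-\theta}\}_1$. Coset conformal vector $\omega=\frac1{10}[(-\lambda_1+\lambda_6)(-1)^2+(\lambda_3-\lambda_5)(-1)^2+(\lambda_1-\lambda_3+\lambda_5-\lambda_6)(-1)^2]\otimes e^0+\frac15(-1\otimes e^{\pm\gamma_1}-1\otimes e^{\pm\gamma_2}+1\otimes e^{\pm\gamma_3})$, $\gamma_1=\alpha_1-\alpha_6$, $\gamma_2=\alpha_3-\alpha_5$, $\gamma_3=\gamma_1+\gamma_2$, $1\otimes e^{\pm\gamma}:=1\otimes e^\gamma+1\otimes e^{-\gamma}$; $L(n)=\{\omega\}_{n+1}$ (Virasoro, $c=4/5$, commuting with $\tilde{\mathfrak a}$). $\omega_4=\frac{\lambda_1+\lambda_6}2$, $\Omega_4$ the level one $F_4^{(1)}$ weight with finite part $\omega_4$, $W^{\Omega_4}$ its irreducible module. A nonzero $v$ is a highest weight vector of type $Vir(\frac45,h)\otimes W^{\Omega_j}$ if (HW1) $\{1\otimes e^{-\theta}\}_1v=0$; (HW2) $\{\beta_i\}_0v=0$, $i=1,\dots,4$; (HW3) $L(1)v=L(2)v=0$; (HW4) $L(0)v=hv$; (HW5) $v\in\bigoplus_kS(\hat{\mathfrak h}^-)\otimes e^{\nu_k}$ with $\mathrm{Proj}(\nu_k)=\omega_j$. (The lattice is written $P_{\rm wt}$ here to avoid a clash with the vector named $P$.) *)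

(* Concrete model of the lattice vertex operator (super)algebra
   V_{P_wt} = S(hhat^-) (x) C[P_wt] for E_6, sufficient to state Lemma 6.3.
   Everything is defined over an arbitrary field F (structure constants are
   rational); the theorem is stated for F = algC (the complex algebraic numbers,
   the library's model of C). *)
From HB Require Import structures.
From mathcomp Require Import all_boot all_order all_algebra.
From mathcomp Require Import algC.

Set Implicit Arguments. Unset Strict Implicit. Unset Printing Implicit Defensive.
Import Order.TTheory GRing.Theory Num.Theory.
Local Open Scope ring_scope.

(* Indices: the ordinal i : 'I_6 stands for alpha_(i+1) / lambda_(i+1).       *)
(* Bourbaki labelling: chain a1-a3-a4-a5-a6, a2 attached to a4.              *)

(* the six indices, listed explicitly (computable version of enum 'I_6) *)
Definition ords6 : seq 'I_6 :=
  [:: @Ordinal 6 0 isT; @Ordinal 6 1 isT; @Ordinal 6 2 isT;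
      @Ordinal 6 3 isT; @Ordinal 6 4 isT; @Ordinal 6 5 isT].
Definition sum6 (R : nmodType) (f : 'I_6 -> R) : R :=
  foldr (fun i acc => f i + acc) 0 ords6.

Definition e6edge (a b : nat) : bool :=
  let e x y := ((a == x) && (b == y)) || ((a == y) && (b == x)) in
  [|| e 0 2, e 2 3, e 3 4, e 4 5 | e 1 3]%N.

Definition cartanE6 (i j : 'I_6) : int :=
  if i == j then 2 else if e6edge i j then -1 else 0.

(* 3 * inverse Cartan matrix: 3 <lambda_i, lambda_j> ; equivalently lambda_i
   = sum_j (cinv3 i j / 3) alpha_j. *)
Definition cinv3_rows : seq (seq int) :=
  [:: [:: 4; 3; 5; 6; 4; 2];
      [:: 3; 6; 6; 9; 6; 3];
      [:: 5; 6; 10; 12; 8; 4];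
      [:: 6; 9; 12; 18; 12; 6];
      [:: 4; 6; 8; 12; 10; 5];
      [:: 2; 3; 4; 6; 5; 4]].
Definition cinv3 (i j : 'I_6) : int := nth 0 (nth [::] cinv3_rows i) j.

(* Elements of P_wt, in lambda-coordinates: the list [b_1;...;b_6] stands for
   sum_i b_i lambda_i  (only lists of length 6 ever occur). *)
Definition lat := seq int.
Definition latc (x : lat) (i : 'I_6) : int := nth 0 x i.
(* Elements of Q given by alpha-coordinates (int-valued functions). *)
Definition qcoord := 'I_6 -> int.
Definition mkq (l : seq int) : qcoord := fun i => nth 0 l i.
(* lambda-coordinates of sum_i a_i alpha_i *)
Definition latA (a : qcoord) : lat := [seq sum6 (fun i => a i * cartanE6 i j) | j <- ords6].
Definition lat_add (x y : lat) : lat := [seq latc x i + latc y i | i <- ords6].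
(* <alpha, beta> for alpha in Q (alpha-coords) and beta in P_wt (lambda-coords) *)
Definition pairQP (a : qcoord) (beta : lat) : int := sum6 (fun i => a i * latc beta i).

(* The 2-cocycle epsilon: bimultiplicative on P_wt with
   epsilon(lambda_i, lambda_j) = -1 exactly at these (i,j) (1-based):
   (2,1),(2,6),(3,1),(4,2),(5,6). *)
Definition epsneg (i j : 'I_6) : bool :=
  [|| ((i : nat) == 1) && ((j : nat) == 0), ((i : nat) == 1) && ((j : nat) == 5),
      ((i : nat) == 2) && ((j : nat) == 0), ((i : nat) == 3) && ((j : nat) == 1)
    | ((i : nat) == 4) && ((j : nat) == 5)]%N.
Definition eps (F : fieldType) (x y : lat) : F :=
  if odd (absz (sum6 (fun i => sum6 (fun j => if epsneg i j then latc x i * latc y j else 0))))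
  then -1 else 1.

(* h = C (x) P_wt, elements given by their alpha-coordinates. *)
Definition hvec (F : fieldType) := 'I_6 -> F.
Definition hroot (F : fieldType) (a : qcoord) : hvec F := fun i => (a i)%:~R.
(* sum_j c_j lambda_j, with integer c *)
Definition hlam (F : fieldType) (c : seq int) : hvec F :=
  fun i => sum6 (fun j => (nth 0 c j)%:~R * (cinv3 j i)%:~R / 3%:R).
Definition hopp (F : fieldType) (h : hvec F) : hvec F := fun i => - h i.

(* Basis of V_{P_wt}: a monomial alpha_{i1}(-n1)...alpha_{ik}(-nk) (x) e^beta, *)
(* n's >= 1, stored as the list [(i1,n1);...;(ik,nk)] (order irrelevant).    *)
Definition mono := seq ('I_6 * nat).
Definition basis := (mono * lat)%type.
Definition vect (F : fieldType) := seq (F * basis).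

Definition coef (F : fieldType) (v : vect F) (b : basis) : F :=
  foldr (fun t acc => (if perm_eq t.2.1 b.1 && (t.2.2 == b.2) then t.1 else 0) + acc) 0 v.
Definition vzero (F : fieldType) (v : vect F) : Prop := forall b, coef v b = 0.

Definition vbind (F : fieldType) (f : basis -> vect F) (v : vect F) : vect F :=
  flatten [seq [seq (t.1 * u.1, u.2) | u <- f t.2] | t <- v].
Definition vscale (F : fieldType) (c : F) (v : vect F) : vect F :=
  [seq (c * t.1, t.2) | t <- v].

Definition wt (b : basis) : nat := sumn (map snd b.1).

Definition pair_h_root (F : fieldType) (h : hvec F) (j : 'I_6) : F :=
  sum6 (fun i => h i * (cartanE6 i j)%:~R).
Definition pair_h_lat (F : fieldType) (h : hvec F) (beta : lat) : F :=
  sum6 (fun i => h i * (latc beta i)%:~R).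
Definition heis_cre (F : fieldType) (h : hvec F) (n : nat) (b : basis) : vect F :=
  [seq (h i, ((i, n) :: b.1, b.2)) | i <- ords6].
Definition heis_ann (F : fieldType) (h : hvec F) (n : nat) (b : basis) : vect F :=
  [seq (n%:R * pair_h_root h (nth (ord0, 0%N) b.1 k).1,
        (take k b.1 ++ drop k.+1 b.1, b.2))
  | k <- iota 0 (size b.1) & (nth (ord0, 0%N) b.1 k).2 == n].
Definition heis (F : fieldType) (h : hvec F) (n : int) (b : basis) : vect F :=
  match n with
  | Posz 0 => [:: (pair_h_lat h b.2, b)]
  | Posz k.+1 => heis_ann h k.+1 b
  | Negz k => heis_cre h k.+1 b      (* Negz k = -(k+1) *)
  end.

(* Formal Laurent series in z with coefficients in V, as lists of           *)
(* (power of z, coefficient, basis element).                                 *)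
Definition lser (F : fieldType) := seq (int * (F * basis)).
Definition vlift (F : fieldType) (p : int) (v : vect F) : lser F := [seq (p, t) | t <- v].
(* apply an operator-valued series termwise; f p b gives the series applied to
   basis element b sitting at power p (relative powers) *)
Definition sbind (F : fieldType) (f : int -> basis -> lser F) (s : lser F) : lser F :=
  flatten [seq [seq (t.1 + u.1, (t.2.1 * u.2.1, u.2.2)) | u <- f t.1 t.2.2] | t <- s].
Definition extract (F : fieldType) (N : int) (s : lser F) : vect F :=
  [seq t.2 | t <- s & t.1 == N].

Fixpoint comps_fuel (fuel n : nat) : seq (seq nat) :=
  if n is 0 then [:: [::]] else
  if fuel is f.+1 then flatten [seq [seq k :: s | s <- comps_fuel f (n - k)] | k <- iota 1 n]
  else [::].
Definition comps (n : nat) := comps_fuel n n.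

(* coefficient of w^j in exp(sum_{k>=1} c_k A_k w^k) = sum_r (1/r!) (sum_k ...)^r,
   applied to b *)
Definition expcoef (F : fieldType) (c : nat -> F) (A : nat -> basis -> vect F)
    (j : nat) (b : basis) : vect F :=
  flatten [seq vscale ((size s)`!%:R^-1 * foldr (fun k acc => c k * acc) 1 s)
                      (foldr (fun k v => vbind (A k) v) [:: (1, b)] s)
          | s <- comps j].

(* powers q >= 0 with p + q <= N (truncation: only powers <= N are kept;
   this is exact for the coefficient of z^N since the outer factors below only
   contain nonnegative powers of z) *)
Definition trunc_range (N p : int) : seq nat :=
  if p <= N then iota 0 (absz (N - p)).+1 else [::].

(* h^+(z) = sum_{n >= 0} h(n) z^{-n-1}   (finite on each vector) *)
Definition hplus (F : fieldType) (h : hvec F) : int -> basis -> lser F :=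
  fun _ b => flatten [seq vlift (- (n%:Z) - 1) (heis h n b) | n <- iota 0 (wt b).+1].
(* h^-(z) = sum_{n < 0} h(n) z^{-n-1} = sum_{q>=0} h(-q-1) z^q, truncated at N *)
Definition hminus (F : fieldType) (N : int) (h : hvec F) : int -> basis -> lser F :=
  fun p b => flatten [seq vlift q%:Z (heis h (Negz q) b) | q <- trunc_range N p].
Definition ealpha (F : fieldType) (a : qcoord) : int -> basis -> lser F :=
  fun _ b => [:: (pairQP a b.2, (eps F (latA a) b.2, (b.1, lat_add (latA a) b.2)))].
(* exp(- sum_{k>=1} alpha(k)/k z^{-k})  (finite on each vector) *)
Definition Eplus (F : fieldType) (a : qcoord) : int -> basis -> lser F :=
  fun _ b => flatten [seq vlift (- (j%:Z))
                  (expcoef (fun k => - (k%:R)^-1) (fun k => heis (hroot F a) k%:Z) j b)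
                | j <- iota 0 (wt b).+1].
(* exp(sum_{k>=1} alpha(-k)/k z^{k}), truncated at N *)
Definition Eminus (F : fieldType) (N : int) (a : qcoord) : int -> basis -> lser F :=
  fun p b => flatten [seq vlift j%:Z
                  (expcoef (fun k => (k%:R)^-1) (fun k => heis (hroot F a) (- (k%:Z))) j b)
                | j <- trunc_range N p].

(* :h_1(z)...h_k(z) Y(1 (x) e^alpha, z):  with
   Y(1 (x) e^alpha,z) = E^-(alpha,z) E^+(alpha,z) e_alpha z^{alpha(0)} and
   :h(z) X(z): = h^-(z) X(z) + X(z) h^+(z)  (recursively). *)
Fixpoint NO (F : fieldType) (N : int) (hs : seq (hvec F)) (a : qcoord) (s : lser F)
  : lser F :=
  if hs is h :: hs' then
    sbind (hminus N h) (NO N hs' a s) ++ NO N hs' a (sbind (hplus h) s)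
  else sbind (Eminus F N a) (sbind (Eplus F a) (sbind (ealpha F a) s)).

(* the mode {h_1(-1)...h_k(-1) (x) e^alpha}_m : coefficient of z^{-m-1} *)
Definition Ymode (F : fieldType) (hs : seq (hvec F)) (a : qcoord) (m : int) (v : vect F)
  : vect F :=
  extract (- m - 1) (NO (- m - 1) hs a (vlift 0 v)).

(* linear combinations of such vectors: (coefficient, [h_1;...;h_k], alpha) *)
Definition descr (F : fieldType) := (F * seq (hvec F) * qcoord)%type.
Definition Ymode_lin (F : fieldType) (w : seq (descr F)) (m : int) (v : vect F)
  : vect F :=
  flatten [seq vscale d.1.1 (Ymode d.1.2 d.2 m v) | d <- w].

Definition theta : qcoord := mkq [:: 1; 2; 2; 3; 2; 1].
Definition qopp (a : qcoord) : qcoord := fun i => - a i.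
Definition qalpha (i : nat) : qcoord := fun j => if (j : nat) == i then 1 else 0.

(* raising operators of F_4^(1) *)
Definition raise1 (F : fieldType) (v : vect F) : vect F := Ymode [::] (qalpha 1) 0 v.
Definition raise2 (F : fieldType) (v : vect F) : vect F := Ymode [::] (qalpha 3) 0 v.
Definition raise3 (F : fieldType) (v : vect F) : vect F :=
  Ymode [::] (qalpha 2) 0 v ++ Ymode [::] (qalpha 4) 0 v.
Definition raise4 (F : fieldType) (v : vect F) : vect F :=
  Ymode [::] (qalpha 0) 0 v ++ Ymode [::] (qalpha 5) 0 v.
Definition raise0 (F : fieldType) (v : vect F) : vect F := Ymode [::] (qopp theta) 1 v.

Definition gamma1 : qcoord := mkq [:: 1; 0; 0; 0; 0; -1].
Definition gamma2 : qcoord := mkq [:: 0; 0; 1; 0; -1; 0].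
Definition gamma3 : qcoord := mkq [:: 1; 0; 1; 0; -1; -1].
Definition qzero : qcoord := fun _ => 0.
Definition omega_descr (F : fieldType) : seq (descr F) :=
  let ha := hlam F [:: -1; 0; 0; 0; 0; 1] in
  let hb := hlam F [:: 0; 0; 1; 0; -1; 0] in
  let hc := hlam F [:: 1; 0; -1; 0; 1; -1] in
  let c10 : F := 10%:R^-1 in let c5 : F := 5%:R^-1 in
  [:: (c10, [:: ha; ha], qzero); (c10, [:: hb; hb], qzero); (c10, [:: hc; hc], qzero);
      (- c5, [::], gamma1); (- c5, [::], qopp gamma1);
      (- c5, [::], gamma2); (- c5, [::], qopp gamma2);
      (c5, [::], gamma3); (c5, [::], qopp gamma3)].

(* L(n) = {omega}_{n+1} *)
Definition Lvir (F : fieldType) (n : int) (v : vect F) : vect F :=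
  Ymode_lin (omega_descr F) (n + 1) v.

(* tau on lambda-coordinates: lambda_1<->lambda_6, lambda_3<->lambda_5 *)
Definition tau_idx (i : 'I_6) : 'I_6 := nth i [:: nth i ords6 5; nth i ords6 1; nth i ords6 4;
  nth i ords6 3; nth i ords6 2; nth i ords6 0] i.
Definition Proj (F : fieldType) (nu : lat) : 'I_6 -> F :=
  fun i => ((latc nu i)%:~R + (latc nu (tau_idx i))%:~R) / 2%:R.
Definition omega4 (F : fieldType) : 'I_6 -> F :=
  fun i => if ((i : nat) == 0%N) || ((i : nat) == 5%N) then 2%:R^-1 else 0.

Definition is_hwv (F : fieldType) (v : vect F) (h : F) (om : 'I_6 -> F) : Prop :=
  [/\ (exists b, coef v b != 0),
      vzero (raise0 v) (* HW1 *),
      [/\ vzero (raise1 v), vzero (raise2 v), vzero (raise3 v) & vzero (raise4 v)] (* HW2 *),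
      (vzero (Lvir 1 v) /\ vzero (Lvir 2 v)) (* HW3 *)
      /\ (forall b, coef (Lvir 0 v) b = h * coef v b) (* HW4 *)
    & forall b, coef v b != 0 -> forall i, Proj F b.2 i = om i].

Definition mu : qcoord := mkq [:: 1; 1; 2; 2; 1; 1].
Definition taumu : qcoord := mkq [:: 1; 1; 1; 2; 2; 1].
Definition Pvec (F : fieldType) : vect F :=
  let h : hvec F := hroot F (mkq [:: -2; 0; -1; 0; 1; 2]) in
  heis_cre h 1 ([::], latA mu) ++ heis_cre (hopp h) 1 ([::], latA taumu) ++
  [:: (3%:R, ([::], latA (mkq [:: 2; 1; 2; 2; 1; 0])));
      (3%:R, ([::], latA (mkq [:: 0; 1; 1; 2; 2; 2])))].

From mathcomp Require Import all_boot all_order all_algebra algC.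
From Stdlib Require Import FunctionalExtensionality.
Import GRing.Theory.
Set Implicit Arguments. Unset Strict Implicit.
Local Open Scope ring_scope.

(* All structure constants of the vertex operators are rational, so every
   construction commutes with a field embedding; in particular being a highest
   weight vector is inherited along rat -> algC.  Over rat each of (HW1)-(HW4)
   says that an explicit finite combination of basis vectors vanishes, which is
   decided by grouping equal basis vectors and summing their coefficients. *)

Section Coefficients.
Variable F : fieldType.
Implicit Types (v w : vect F) (b : basis).

Definition same_basis (x y : basis) : bool := perm_eq x.1 y.1 && (x.2 == y.2).

Lemma same_basis_sym x y : same_basis x y = same_basis y x.
Proof. by rewrite /same_basis perm_sym eq_sym. Qed.

Lemma same_basis_trans x y z : same_basis x y -> same_basis y z -> same_basis x z.
Proof.
rewrite /same_basis => /andP[pxy /eqP exy] /andP[pyz /eqP eyz].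
by rewrite (perm_trans pxy pyz) exy eyz eqxx.
Qed.

Definition coef_total v : F := foldr (fun t acc => t.1 + acc) 0 v.

Lemma coef_cons t v b : coef (t :: v) b = (if same_basis t.2 b then t.1 else 0) + coef v b.
Proof. by []. Qed.

Lemma coef_cat v w b : coef (v ++ w) b = coef v b + coef w b.
Proof. by elim: v => [|t v IH] /=; rewrite ?add0r // IH addrA. Qed.

Lemma coef_filterC (p : pred basis) v b :
  coef v b = coef [seq t <- v | p t.2] b + coef [seq t <- v | ~~ p t.2] b.
Proof.
elim: v => [|t v IH]; first by rewrite /= addr0.
rewrite coef_cons IH /=; case: (p t.2) => /=; rewrite -/(same_basis t.2 b);
  [by rewrite addrA | by rewrite addrCA].
Qed.

Lemma coef_same_basis v x b :
  all (fun t => same_basis t.2 x) v -> coef v b = if same_basis x b then coef_total v else 0.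
Proof.
elim: v => [|t v IH]; first by case: ifP.
move=> /andP[tx vx]; rewrite coef_cons IH //.
have -> : same_basis t.2 b = same_basis x b.
  apply/idP/idP => tb; last exact: same_basis_trans tx tb.
  by apply: same_basis_trans tb; rewrite same_basis_sym.
by case: (same_basis x b); rewrite ?addr0.
Qed.

(* The fuel [n] only serves structural recursion; [size v] always suffices. *)
Fixpoint vzerob_rec (n : nat) v {struct n} : bool :=
  match n, v with
  | _, [::] => true
  | n'.+1, t :: r =>
      (t.1 + coef_total [seq u <- r | same_basis u.2 t.2] == 0) &&
      vzerob_rec n' [seq u <- r | ~~ same_basis u.2 t.2]
  | 0%N, _ :: _ => false
  end.

Definition vzerob v : bool := vzerob_rec (size v) v.

Lemma vzerob_recP n v : (size v <= n)%N -> vzerob_rec n v -> vzero v.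
Proof.
elim: n v => [|n IH] [|t r] //=; try by move=> _ _ b.
move=> size_r /andP[/eqP total_t rest] b.
rewrite coef_cons (coef_filterC (fun x => same_basis x t.2)) (IH _ _ rest) ?addr0.
- rewrite (@coef_same_basis _ t.2); last by apply/allP => u; rewrite mem_filter => /andP[].
  by case: ifP => _; rewrite ?addr0.
- by rewrite size_filter (leq_trans (count_size _ _)).
Qed.

Lemma vzerobP v : vzerob v -> vzero v.
Proof. exact: vzerob_recP. Qed.

Lemma coef_vscale (c : F) v b : coef (vscale c v) b = c * coef v b.
Proof.
elim: v => [|t v IH]; first by rewrite /= mulr0.
by move: IH; rewrite /vscale /= => ->; rewrite mulrDr; case: ifP; rewrite ?mulr0.
Qed.

Lemma vzero_cat_scaleN (c : F) v w :
  vzero (w ++ vscale (- c) v) -> forall b, coef w b = c * coef v b.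
Proof.
move=> w_cv b; apply/eqP; rewrite -subr_eq0 -mulNr -coef_vscale -coef_cat.
exact/eqP/w_cv.
Qed.

Lemma lat_coef_neq0 (p : pred lat) v b :
  all (fun t => p t.2.2) v -> coef v b != 0 -> p b.2.
Proof.
elim: v => [|t v IH]; first by rewrite /= eqxx.
move=> /andP[pt pv]; rewrite coef_cons /same_basis.
by case: (t.2.2 =P b.2) => [<- //|_]; rewrite andbF add0r; apply: IH.
Qed.

End Coefficients.

Section BaseChange.
Variables (F K : fieldType) (f : {rmorphism F -> K}).

Definition map_vect (v : vect F) : vect K := [seq (f t.1, t.2) | t <- v].
Definition map_lser (s : lser F) : lser K := [seq (t.1, (f t.2.1, t.2.2)) | t <- s].
Definition map_hvec (h : hvec F) : hvec K := fun i => f (h i).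
Definition map_descr (d : descr F) : descr K := (f d.1.1, map map_hvec d.1.2, d.2).

Lemma coef_map_vect v b : coef (map_vect v) b = f (coef v b).
Proof.
elim: v => [|t v IH] /=; first by rewrite rmorph0.
by rewrite IH rmorphD; case: ifP; rewrite ?rmorph0.
Qed.

Lemma vzero_map_vect v : vzero v -> vzero (map_vect v).
Proof. by move=> v0 b; rewrite coef_map_vect v0 rmorph0. Qed.

Lemma map_vect_cat v w : map_vect (v ++ w) = map_vect v ++ map_vect w.
Proof. exact: map_cat. Qed.

Lemma map_vect_flatten vs : map_vect (flatten vs) = flatten (map map_vect vs).
Proof. by elim: vs => //= v vs IH; rewrite map_vect_cat IH. Qed.

Lemma map_lser_cat s r : map_lser (s ++ r) = map_lser s ++ map_lser r.
Proof. exact: map_cat. Qed.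

Lemma map_lser_flatten ss : map_lser (flatten ss) = flatten (map map_lser ss).
Proof. by elim: ss => //= s ss IH; rewrite map_lser_cat IH. Qed.

Lemma vscale_map c v : vscale (f c) (map_vect v) = map_vect (vscale c v).
Proof. by rewrite /vscale /map_vect -!map_comp; apply: eq_map => t /=; rewrite rmorphM. Qed.

Lemma vlift_map p v : vlift p (map_vect v) = map_lser (vlift p v).
Proof. by rewrite /vlift /map_vect /map_lser -!map_comp. Qed.

Lemma extract_map N s : extract N (map_lser s) = map_vect (extract N s).
Proof. by rewrite /extract /map_lser /map_vect filter_map -!map_comp. Qed.

Lemma vbind_map g' g v :
  (forall b, g' b = map_vect (g b)) -> vbind g' (map_vect v) = map_vect (vbind g v).
Proof.
move=> g'E; elim: v => [|t v IH] //=.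
rewrite /vbind /= map_vect_cat -/(vbind g' (map_vect v)) -/(vbind g v) IH g'E.
by congr (_ ++ _); rewrite /map_vect -!map_comp; apply: eq_map => u /=; rewrite rmorphM.
Qed.

Lemma sbind_map g' g s :
  (forall p b, g' p b = map_lser (g p b)) -> sbind g' (map_lser s) = map_lser (sbind g s).
Proof.
move=> g'E; elim: s => [|t s IH] //=.
rewrite /sbind /= map_lser_cat -/(sbind g' (map_lser s)) -/(sbind g s) IH g'E.
by congr (_ ++ _); rewrite /map_lser -!map_comp; apply: eq_map => u /=; rewrite rmorphM.
Qed.

Lemma hroot_map a : hroot K a = map_hvec (hroot F a).
Proof. by apply: functional_extensionality => i; rewrite /map_hvec rmorph_int. Qed.

Lemma hlam_map c : hlam K c = map_hvec (hlam F c).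
Proof.
apply: functional_extensionality => i.
by rewrite /hlam /map_hvec /sum6 /= !rmorphD !rmorphM !rmorph_int fmorphV rmorph_nat rmorph0.
Qed.

Lemma hopp_map h : hopp (map_hvec h) = map_hvec (hopp h).
Proof. by apply: functional_extensionality => i; rewrite /hopp /map_hvec rmorphN. Qed.

Lemma heis_map h n b : heis (map_hvec h) n b = map_vect (heis h n b).
Proof.
case: n => [[|k]|k] //=.
- by rewrite /pair_h_lat /sum6 /map_hvec /= !rmorphD !rmorphM !rmorph_int rmorph0.
- rewrite /heis_ann /map_vect -map_comp; apply: eq_map => k' /=.
  by rewrite /pair_h_root /sum6 /map_hvec /= rmorphM rmorph_nat
    !rmorphD !rmorphM !rmorph_int rmorph0.
Qed.

Lemma expcoef_map c' c A' A j b :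
  (forall k, c' k = f (c k)) -> (forall k b, A' k b = map_vect (A k b)) ->
  expcoef c' A' j b = map_vect (expcoef c A j b).
Proof.
move=> c'E A'E; rewrite /expcoef map_vect_flatten -map_comp.
congr flatten; apply: eq_map => s /=.
have -> : foldr (fun k v => vbind (A' k) v) [:: (1, b)] s =
          map_vect (foldr (fun k v => vbind (A k) v) [:: (1, b)] s).
  elim: s => [|k s IH] /=; first by rewrite /map_vect /= rmorph1.
  by rewrite IH (vbind_map _ (A'E k)).
rewrite -vscale_map rmorphM fmorphV rmorph_nat; congr (vscale (_ * _) _).
by elim: s => [|k s IH] /=; rewrite ?rmorph1 // rmorphM IH c'E.
Qed.

Lemma hplus_map h p b : hplus (map_hvec h) p b = map_lser (hplus h p b).
Proof.
rewrite /hplus map_lser_flatten -map_comp; congr flatten; apply: eq_map => n.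
by rewrite heis_map vlift_map.
Qed.

Lemma hminus_map N h p b : hminus N (map_hvec h) p b = map_lser (hminus N h p b).
Proof.
rewrite /hminus map_lser_flatten -map_comp.
by congr flatten; apply: eq_map => n; rewrite heis_map vlift_map.
Qed.

Lemma ealpha_map a p b : ealpha K a p b = map_lser (ealpha F a p b).
Proof. by rewrite /ealpha /map_lser /= /eps; case: ifP; rewrite ?rmorphN1 ?rmorph1. Qed.

Lemma Eplus_map a p b : Eplus K a p b = map_lser (Eplus F a p b).
Proof.
rewrite /Eplus map_lser_flatten -map_comp; congr flatten; apply: eq_map => j /=.
rewrite -vlift_map; congr vlift; apply: expcoef_map => [k|k b'].
- by rewrite rmorphN fmorphV rmorph_nat.
- by rewrite hroot_map heis_map.
Qed.

Lemma Eminus_map N a p b : Eminus K N a p b = map_lser (Eminus F N a p b).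
Proof.
rewrite /Eminus map_lser_flatten -map_comp; congr flatten; apply: eq_map => j /=.
rewrite -vlift_map; congr vlift; apply: expcoef_map => [k|k b'].
- by rewrite fmorphV rmorph_nat.
- by rewrite hroot_map heis_map.
Qed.

Lemma NO_map N hs a s : NO N (map map_hvec hs) a (map_lser s) = map_lser (NO N hs a s).
Proof.
elim: hs s => [|h hs IH] s /=.
- rewrite (sbind_map _ (ealpha_map a)) (sbind_map _ (Eplus_map a)).
  exact: (sbind_map _ (Eminus_map N a)).
- by rewrite map_lser_cat (sbind_map _ (hplus_map h)) !IH (sbind_map _ (hminus_map N h)).
Qed.

Lemma Ymode_map hs a m v :
  Ymode (map map_hvec hs) a m (map_vect v) = map_vect (Ymode hs a m v).
Proof. by rewrite /Ymode vlift_map NO_map extract_map. Qed.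

Lemma Ymode_nil_map a m v : Ymode [::] a m (map_vect v) = map_vect (Ymode [::] a m v).
Proof. exact: (Ymode_map [::]). Qed.

Lemma Ymode_lin_map w m v :
  Ymode_lin (map map_descr w) m (map_vect v) = map_vect (Ymode_lin w m v).
Proof.
rewrite /Ymode_lin map_vect_flatten -!map_comp; congr flatten; apply: eq_map => d /=.
by rewrite Ymode_map vscale_map.
Qed.

Lemma Lvir_map n v : Lvir n (map_vect v) = map_vect (Lvir n v).
Proof.
rewrite /Lvir.
have -> : omega_descr K = map map_descr (omega_descr F).
  by rewrite /omega_descr /map_descr /= !hlam_map !rmorphN !fmorphV !rmorph_nat.
by rewrite /Lvir Ymode_lin_map.
Qed.

Lemma Proj_map nu i : Proj K nu i = f (Proj F nu i).
Proof. by rewrite /Proj fmorph_div rmorphD !rmorph_int rmorph_nat. Qed.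

Lemma is_hwv_map v h om : is_hwv v h om -> is_hwv (map_vect v) (f h) (f \o om).
Proof.
case=> [[b0 vb0_neq0] HW1 [HW21 HW22 HW23 HW24] [[HW31 HW32] HW4] HW5]; split.
- by exists b0; rewrite coef_map_vect fmorph_eq0.
- by rewrite /raise0 Ymode_nil_map; apply: vzero_map_vect.
- rewrite /raise1 /raise2 /raise3 /raise4 !Ymode_nil_map -!map_vect_cat.
  by split; apply: vzero_map_vect.
- rewrite !Lvir_map; split; first by split; apply: vzero_map_vect.
  by move=> b; rewrite !coef_map_vect HW4 rmorphM.
- by move=> b; rewrite coef_map_vect fmorph_eq0 => /HW5 Hom i; rewrite Proj_map Hom.
Qed.

Lemma Pvec_map : Pvec K = map_vect (Pvec F).
Proof.
rewrite /Pvec !map_vect_cat hroot_map hopp_map /map_vect /heis_cre -!map_comp /=.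
by rewrite rmorph_nat.
Qed.

Lemma omega4_map : omega4 K = f \o omega4 F.
Proof.
apply: functional_extensionality => i /=.
by rewrite /omega4; case: ifP; rewrite ?fmorphV ?rmorph_nat ?rmorph0.
Qed.

End BaseChange.

Lemma mem_ords6 (i : 'I_6) : i \in ords6.
Proof. by case: i => [[|[|[|[|[|[|m]]]]]] Hi] //; rewrite /ords6 !inE -?val_eqE. Qed.

Lemma Pvec_rat_weights :
  all (fun t => all (fun i => Proj rat t.2.2 i == omega4 rat i) ords6) (Pvec rat).
Proof. by vm_compute. Qed.

Lemma Pvec_rat_hwv : is_hwv (Pvec rat) (7%:R / 5%:R) (omega4 rat).
Proof.
split.
- by exists ([::], latA (mkq [:: 2; 1; 2; 2; 1; 0])); vm_compute.
- by apply: vzerobP; vm_compute.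
- by split; apply: vzerobP; vm_compute.
- split; first by split; apply: vzerobP; vm_compute.
  by apply: vzero_cat_scaleN; apply: vzerobP; vm_compute.
- move=> b /(lat_coef_neq0 (p := fun nu => all (fun i => Proj rat nu i == omega4 rat i) ords6)
    Pvec_rat_weights) /allP weights i.
  exact/eqP/weights/mem_ords6.
Qed.

Theorem lemma6p3 : is_hwv (Pvec algC) (7%:R / 5%:R) (omega4 algC).
Proof.
have := is_hwv_map (@ratr algC) Pvec_rat_hwv.
by rewrite -(Pvec_map ratr) -(omega4_map ratr) fmorph_div !rmorph_nat.
Qed.
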